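(* If $a\in R$ and $a\le1$, then $a\le 1\cdot D(a)$, i.e. $1=\big((a\le0)\wedge1\big)\vee\big((a\le1)\wedge D(a)\big)$ in $B$.
   Context: $R$ is a Riesz space over $\mathbb{Q}$ with strong unit $1$; rationals $r$ are identified with $r\cdot1$. $\mathrm{Spec}(R)$ is the distributive lattice generated by $D(a)$, $a\in R$, subject to $D(1)=1$; $D(a)\wedge D(-a)=0$; $D(a+b)\le D(a)\vee D(b)$; $D(a)=0$ if $a\le0$; $D(a\vee b)=D(a)\vee D(b)$. $B$ is the Boolean algebra freely generated by $\mathrm{Spec}(R)$; $(f>r):=D(f-r)$ and $(f\le r):=\neg(f>r)$. For $f\in R$ and a positive simple function $\sum_js_jy_j$ (rationals $s_j\ge0$, $y_j\in B$): $f\le\sum_js_jy_j$ iff $1=\bigvee_J((f\le s_J)\wedge y_J)$ over all finite index sets $J$, where $y_J=\bigwedge_{j\in J}y_j$ ($y_\emptyset=1$) and $s_J=\sum_{j\in J}s_j$ ($s_\emptyset=0$). *)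

From HB Require Import structures.
From mathcomp Require Import all_boot all_order all_algebra.
Set Implicit Arguments. Unset Strict Implicit. Unset Printing Implicit Defensive.
Import Order.TTheory GRing.Theory Num.Theory.

(* A Riesz space over Q with strong unit [e] ("1"):
   [R] is a Q-vector space, [le] a partial order on it compatible with
   addition and with scaling by nonnegative rationals, [join] is the binary
   supremum for [le] (so R is a lattice), and [e] is a strong unit. *)
Definition riesz_space_with_unit (R : lmodType rat) (le : R -> R -> Prop)
    (join : R -> R -> R) (e : R) : Prop :=
  (forall x, le x x) /\
  (forall x y, le x y -> le y x -> x = y) /\
  (forall x y z, le x y -> le y z -> le x z) /\
  (forall x y z, le x y -> le (x + z)%R (y + z)%R) /\
  (forall (r : rat) x y, (0 <= r)%R -> le x y -> le (r *: x)%R (r *: y)%R) /\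
  (forall x y, le x (join x y) /\ le y (join x y) /\
               (forall z, le x z -> le y z -> le (join x y) z)) /\
  le 0%R e /\
  (forall a, exists n : nat, le (join a (- a)%R) (n%:R *: e)%R).

(* [D : R -> C] satisfies the defining relations of Spec(R), read in a
   Boolean algebra [C] (a complemented distributive lattice with top/bottom). *)
Definition spec_relations (R : lmodType rat) (le : R -> R -> Prop)
    (join : R -> R -> R) (e : R) (disp : Order.disp_t)
    (C : ctbDistrLatticeType disp) (D : R -> C) : Prop :=
  [/\ D e = \top%O,
      (forall a, (D a `&` D (- a)%R)%O = \bot%O),
      (forall a b, (D (a + b)%R <= D a `|` D b)%O),
      (forall a, le a 0%R -> D a = \bot%O) &
      (forall a b, D (join a b) = (D a `|` D b)%O)].

(* (f > r) := D(f - r*1),  (f <= r) := not (f > r). *)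
Definition gtQ (R : lmodType rat) (e : R) (disp : Order.disp_t)
    (C : ctbDistrLatticeType disp) (D : R -> C) (f : R) (r : rat) : C :=
  D (f - r *: e)%R.
Definition leQ (R : lmodType rat) (e : R) (disp : Order.disp_t)
    (C : ctbDistrLatticeType disp) (D : R -> C) (f : R) (r : rat) : C :=
  (~` gtQ e D f r)%O.

From HB Require Import structures.
From mathcomp Require Import all_boot all_order all_algebra.
Import Order.TTheory Order.CTheory GRing.Theory.

Set Implicit Arguments.
Unset Strict Implicit.

(* Since a - 1 <= 0, the relation D(f) = 0 for f <= 0 makes (a > 1) bottom, so
   (a <= 1) is top and the right-hand side collapses to not D(a) \/ D(a). *)

Section LeQ.

Variables (R : lmodType rat) (le : R -> R -> Prop) (join : R -> R -> R) (e : R).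
Hypothesis HR : riesz_space_with_unit le join e.

Lemma riesz_subr_le0 x y : le x y -> le (x - y)%R 0%R.
Proof.
case: HR => _ [_ [_ [le_add _]]] le_xy.
by have := le_add _ _ (- y)%R le_xy; rewrite subrr.
Qed.

Variables (disp : Order.disp_t) (C : ctbDistrLatticeType disp) (D : R -> C).
Hypothesis HD : spec_relations le join e D.

Lemma leQ0 f : leQ e D f 0 = (~` D f)%O.
Proof. by rewrite /leQ /gtQ scale0r subr0. Qed.

Lemma leQ_top f (r : rat) : le f (r *: e)%R -> leQ e D f r = \top%O.
Proof.
case: HD => _ _ _ D_le0 _ le_f.
by rewrite /leQ /gtQ (D_le0 _ (riesz_subr_le0 le_f)) compl0.
Qed.

End LeQ.

Theorem lemma4p6 (R : lmodType rat) (le : R -> R -> Prop) (join : R -> R -> R)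
    (e : R) (HR : riesz_space_with_unit le join e) (a : R) (ha : le a e) :
  forall (disp : Order.disp_t) (C : ctbDistrLatticeType disp) (D : R -> C),
    spec_relations le join e D ->
    \top%O = ((leQ e D a 0 `&` \top) `|` (leQ e D a 1 `&` D a))%O.
Proof.
move=> disp C D HD.
have le_a1 : le a (1 *: e)%R by rewrite scale1r.
by rewrite leQ0 (leQ_top HR HD le_a1) meetx1 meet1x joinCx.
Qed.
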